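(* Fix $t\in\{0,\dots,T\}$ and a $\mathcal F_t$-measurable random vector $\zeta_t:\Omega\to\mathbb R^d$. Then $$\zeta_t\in -K_t\quad \mathcal P\text{-q.s.}\qquad\Longleftrightarrow\qquad \langle \zeta_t, X_t\rangle\le 0\quad \overline{\mathcal P}\text{-q.s.}$$ Consequently, an $\mathbb F$-adapted process $\eta=(\eta_t)_{0\le t\le T}$ is an admissible trading strategy (i.e. $\eta\in\mathcal A$) if and only if $\langle\eta_t,X_t\rangle\le 0$ $\overline{\mathcal P}$-q.s. for all $t\le T$.
   Context: Abstract setting: $(\Omega,\mathcal F)$ is a measurable space with two filtrations $\mathbb F^0=(\mathcal F^0_t)_{t=0,\dots,T}\subset\mathbb F=(\mathcal F_t)_{t=0,\dots,T}$, $T\in\mathbb N$, and $\mathcal P$ is an arbitrary nonempty family of probability measures on $(\Omega,\mathcal F)$. A set is $\mathcal P$-polar if it is contained in a universally measurable set which is null under every $\mathbb P\in\mathcal P$; ''$\mathcal P$-q.s.'' means outside a $\mathcal P$-polar set. Let $d\ge 2$ and $\langle x,y\rangle=\sum_i x^iy^i$. For each $t$, $K_t:\Omega\to 2^{\mathbb R^d}$ is an $\mathcal F^0_t$-measurable random set such that each $K_t(\omega)$ is a closed convex cone containing $\mathbb R^d_+$; $K_t^*(\omega):=\{y\in\mathbb R^d:\langle x,y\rangle\ge0\ \forall x\in K_t(\omega)\}$ and $K_t^{*,0}(\omega):=\{y\in K^*_t(\omega): y^d=1\}$. Standing assumptions: $K_t^*(\omega)\cap\partial\mathbb R^d_+=\{0\}$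 and $\mathrm{int}K^*_t(\omega)\neq\emptyset$ for all $\omega,t$; $S$ is an $\mathbb F^0$-adapted process with $S_t(\omega)\in K^{*,0}_t(\omega)\cap\mathrm{int}K^*_t(\omega)$ for all $\omega,t$; and there is a constant $c>1$ such that $c^{-1}S^i_t(\omega)\le y^i\le cS^i_t(\omega)$ for all $i\le d-1$, $y\in K^{*,0}_t(\omega)$, $\omega$, $t$. An $\mathbb F$-adapted process $\eta$ is an admissible trading strategy ($\eta\in\mathcal A$) if $\eta_t\in -K_t$ $\mathcal P$-q.s. for all $t\le T$. Enlargement: $\Lambda_1:=[c^{-1},c]^{d-1}$, $\Lambda:=(\Lambda_1)^{T+1}$ with elements $\theta=(\theta_0,\dots,\theta_T)$, $\mathcal F^\Lambda_T$ its Borel $\sigma$-field, $\overline\Omega:=\Omega\times\Lambda$, $\overline{\mathcal F}:=\mathcal F\otimes\mathcal F^\Lambda_T$. For $\bar\omega=(\omega,\theta)$, $X_t(\bar\omega):=\Pi_{K^{*,0}_t(\omega)}[S_t(\omega)\theta_t]$, where $S_t(\omega)\theta_t:=(S^1_t(\omega)\theta^1_t,\dots,S^{d-1}_t(\omega)\theta^{d-1}_t,S^d_t(\omega))$ and $\Pi_C$ is the Euclidean projection onto the closed convex set $C$. $\overline{\mathcal P}:=\{\overline{\mathbb P}$ probability on $(\overline\Omega,\overline{\mathcal F})$ with $\overline{\mathbb P}|_\Omega\in\mathcal P\}$. *)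

From mathcomp Require Import all_boot all_order all_algebra.
From mathcomp Require Import all_classical all_reals all_analysis.
Import numFieldNormedType.Exports.
Set Implicit Arguments.
Unset Strict Implicit.
Unset Printing Implicit Defensive.
Import Order.TTheory GRing.Theory Num.Theory.
Local Open Scope classical_set_scope.
Local Open Scope ring_scope.

Section Defs.
Variable R : realType.

Definition dotv (d : nat) (x y : 'rV[R]_d) : R := \sum_(i < d) x 0 i * y 0 i.

Definition is_proj (d : nat) (C : set 'rV[R]_d) (x y : 'rV[R]_d) : Prop :=
  C y /\ forall z, C z -> dotv (x - y) (x - y) <= dotv (x - z) (x - z).
Definition proj (d : nat) (C : set 'rV[R]_d) (x : 'rV[R]_d) : 'rV[R]_d :=
  xget 0 [set y | is_proj C x y].

Definition orthant (d : nat) : set 'rV[R]_d := [set x | forall i, 0 <= x 0 i].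
Definition orthant_boundary (d : nat) : set 'rV[R]_d :=
  [set x | (forall i, 0 <= x 0 i) /\ exists i, x 0 i = 0].
Definition convex_cone (d : nat) (K : set 'rV[R]_d) : Prop :=
  K 0 /\ (forall x y, K x -> K y -> K (x + y)) /\
  (forall (a : R) x, 0 <= a -> K x -> K (a *: x)).
Definition dual_cone (d : nat) (K : set 'rV[R]_d) : set 'rV[R]_d :=
  [set y | forall x, K x -> 0 <= dotv x y].
(* K^{*,0} = { y in K^* : y^d = 1 } (last coordinate, index d-1, equals 1) *)
Definition dual_cone0 (d : nat) (K : set 'rV[R]_d) : set 'rV[R]_d :=
  [set y | dual_cone K y /\ forall i : 'I_d, val i = d.-1 -> y 0 i = 1].

Definition Stheta (d : nat) (s : 'rV[R]_d) (th : (d.-1).-tuple R) : 'rV[R]_d :=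
  \row_i (if (val i < d.-1)%N then s 0 i * nth 0 (tval th) i else s 0 i).

Definition meas_wrt (T : Type) (G : set (set T)) (f : T -> R) : Prop :=
  forall B : set R, measurable B -> G (f @^-1` B).
Definition meas_wrt_vec (T : Type) (d : nat) (G : set (set T))
  (f : T -> 'rV[R]_d) : Prop :=
  forall i : 'I_d, meas_wrt G (fun w => f w 0 i).
Definition meas_random_set (T : Type) (d : nat) (G : set (set T))
  (K : T -> set 'rV[R]_d) : Prop :=
  forall O : set 'rV[R]_d, open O -> G [set w | K w `&` O !=set0].

(* A is universally measurable: measurable for the completion of every
   probability measure on the space. *)
Definition univ_measurable (dT : measure_display) (T : measurableType dT)
  (A : set T) : Prop :=
  forall P : probability T R, exists B C : set T,
    [/\ measurable B, measurable C, B `<=` A, A `<=` C & P (C `\` B) = 0%E].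
Definition null_set (dT : measure_display) (T : measurableType dT)
  (P : probability T R) (A : set T) : Prop :=
  exists C : set T, [/\ measurable C, A `<=` C & P C = 0%E].
Definition polar (dT : measure_display) (T : measurableType dT)
  (Ps : set (probability T R)) (N : set T) : Prop :=
  exists A : set T, [/\ N `<=` A, univ_measurable A &
    forall P, Ps P -> null_set P A].
Definition qs (dT : measure_display) (T : measurableType dT)
  (Ps : set (probability T R)) (Q : T -> Prop) : Prop :=
  polar Ps [set w | ~ Q w].

(* Lambda is realised inside the product-Borel space
   L := ((d-1)-tuples of reals)^(T+1); Lambda = ([c^-1, c]^(d-1))^(T+1). *)
Definition Lspace (T d : nat) := (T.+1).-tuple ((d.-1).-tuple R).
Definition Lambda (T d : nat) (c : R) : set (Lspace T d) :=
  [set th | forall (t : 'I_T.+1) (i : 'I_(d.-1)),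
     c^-1 <= tnth (tnth th t) i <= c].
(* bar P: probabilities on Omega x Lambda whose Omega-marginal is in Ps *)
Definition Pbar (dO : measure_display) (Om : measurableType dO) (T d : nat)
  (c : R) (Ps : set (probability Om R)) :
  set (probability (Om * Lspace T d)%type R) :=
  [set Q | (exists2 P, Ps P &
              forall A : set Om, measurable A -> Q (A `*` setT) = P A)
           /\ Q (setT `*` @Lambda T d c) = 1%E].

Definition Xproc (dO : measure_display) (Om : measurableType dO) (T d : nat)
  (K : 'I_T.+1 -> Om -> set 'rV[R]_d) (S : 'I_T.+1 -> Om -> 'rV[R]_d)
  (t : 'I_T.+1) (w : (Om * Lspace T d)%type) : 'rV[R]_d :=
  proj (dual_cone0 (K t w.1)) (Stheta (S t w.1) (tnth w.2 t)).

Definition filtration (dO : measure_display) (Om : measurableType dO) (T : nat)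
  (G : 'I_T.+1 -> set (set Om)) : Prop :=
  (forall t, sigma_algebra setT (G t)) /\
  (forall t, G t `<=` measurable) /\
  (forall s t : 'I_T.+1, (s <= t)%N -> G s `<=` G t).

Definition adapted (Om : Type) (T d : nat) (G : 'I_T.+1 -> set (set Om))
  (eta : 'I_T.+1 -> Om -> 'rV[R]_d) : Prop :=
  forall t, meas_wrt_vec (G t) (eta t).

Definition admissible (dO : measure_display) (Om : measurableType dO) (T d : nat)
  (Ps : set (probability Om R)) (K : 'I_T.+1 -> Om -> set 'rV[R]_d)
  (eta : 'I_T.+1 -> Om -> 'rV[R]_d) : Prop :=
  forall t, qs Ps (fun w => K t w (- eta t w)).

Definition cone_assumptions (Om : Type) (T d : nat)
  (F0 : 'I_T.+1 -> set (set Om)) (K : 'I_T.+1 -> Om -> set 'rV[R]_d) : Prop :=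
  forall t,
    meas_random_set (F0 t) (K t) /\
    forall w, [/\ closed (K t w), convex_cone (K t w), @orthant d `<=` K t w,
                  dual_cone (K t w) `&` @orthant_boundary d = [set 0] &
                  (dual_cone (K t w))° !=set0].

Definition price_assumptions (Om : Type) (T d : nat)
  (F0 : 'I_T.+1 -> set (set Om)) (K : 'I_T.+1 -> Om -> set 'rV[R]_d)
  (S : 'I_T.+1 -> Om -> 'rV[R]_d) (c : R) : Prop :=
  adapted F0 S /\
  (forall t w, dual_cone0 (K t w) (S t w) /\ (dual_cone (K t w))° (S t w)) /\
  1 < c /\
  (forall t w (y : 'rV[R]_d) (i : 'I_d), (val i < d.-1)%N ->
     dual_cone0 (K t w) y -> c^-1 * S t w 0 i <= y 0 i <= c * S t w 0 i).

End Defs.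
Arguments Lambda {R} T d c.
Arguments Pbar {R dO Om} T d c Ps.

From Pilot Require Import Defs.
From HB Require Import structures.
From mathcomp Require Import all_boot all_order all_algebra.
From mathcomp Require Import all_classical all_reals all_analysis.
From mathcomp Require Import ring lra.
Import numFieldNormedType.Exports.
Import Order.TTheory GRing.Theory Num.Theory.
Set Implicit Arguments.
Unset Strict Implicit.
Unset Printing Implicit Defensive.
Local Open Scope classical_set_scope.
Local Open Scope ring_scope.

(* By the bipolar theorem, and because the boundary condition lets
   every nonzero vector of K^* be rescaled so that its last coordinate is 1,
   -zeta lies in K iff <zeta, y> <= 0 for every y in K^{*,0}.  Each such y has
   y^i in [c^-1 S^i, c S^i], so y = S theta for some theta in Lambda, and y is
   approximated by S theta_k for theta_k in a countable dense subset of Lambda;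
   the projection X = Pi_{K^{*,0}}[S theta_k] is then at most twice as far from y
   as S theta_k is.  Since P (x) delta_theta belongs to Pbar, a Pbar-polar set
   has P-polar theta-sections, and countably many sections suffice.  The
   converse holds because X always lies in K^{*,0} and hence in K^*. *)

Lemma ord_eq_pred n (i : 'I_n) : ~~ (i < n.-1)%N -> val i = n.-1.
Proof.
rewrite -leqNgt => h; apply/eqP; rewrite eqn_leq h andbT -ltnS.
exact: leq_trans (ltn_ord i) (leqSpred n).
Qed.

Section Euclidean.
Variables (R : realType) (d : nat).
Implicit Types (x y z u v w : 'rV[R]_d) (a t : R).

Lemma dotvC x y : dotv x y = dotv y x.
Proof. by apply: eq_bigr => i _; rewrite mulrC. Qed.

Lemma dotvBr x y z : dotv x (y - z) = dotv x y - dotv x z.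
Proof. by rewrite /dotv -sumrB; apply: eq_bigr => i _; rewrite !mxE mulrBr. Qed.

Lemma dotvZr a x y : dotv x (a *: y) = a * dotv x y.
Proof. by rewrite /dotv mulr_sumr; apply: eq_bigr => i _; rewrite mxE mulrCA. Qed.

Lemma dotvNr x y : dotv x (- y) = - dotv x y.
Proof. by rewrite -scaleN1r dotvZr mulN1r. Qed.

Lemma dotv0r x : dotv x 0 = 0.
Proof. by rewrite -(scale0r 0) dotvZr mul0r. Qed.

Lemma dotv_deltal i y : dotv (delta_mx 0 i) y = y 0 i.
Proof.
rewrite /dotv (bigD1 i) //= big1 ?addr0 => [|j ji]; first by rewrite mxE !eqxx mul1r.
by rewrite mxE (negPf ji) andbF mul0r.
Qed.

Lemma sqr_coord_le_dotvv x i : x 0 i ^+ 2 <= dotv x x.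
Proof.
rewrite /dotv (bigD1 i) //= expr2 lerDl.
by apply: sumr_ge0 => j _; rewrite -expr2 sqr_ge0.
Qed.

Lemma dotvv_ge0 x : 0 <= dotv x x.
Proof. by apply: sumr_ge0 => i _; rewrite -expr2 sqr_ge0. Qed.

Lemma dotvv_eq0 x : dotv x x = 0 -> x = 0.
Proof.
move=> x0; apply/rowP => i; rewrite mxE; apply/eqP.
by rewrite -sqrf_eq0 eq_le sqr_ge0 andbT -x0 sqr_coord_le_dotvv.
Qed.

Lemma dotvv_subZ u t x : dotv (u - t *: x) (u - t *: x) =
  dotv u u - 2 * t * dotv u x + t ^+ 2 * dotv x x.
Proof.
rewrite /dotv !mulr_sumr -sumrB -big_split /=.
by apply: eq_bigr => i _; rewrite !mxE; ring.
Qed.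

Lemma dotvv_subr_le u w : dotv (u - w) (u - w) <= 2 * dotv u u + 2 * dotv w w.
Proof.
rewrite /dotv !mulr_sumr -big_split /=; apply: ler_sum => i _; rewrite !mxE.
by have := sqr_ge0 (u 0 i + w 0 i); rewrite expr2; nra.
Qed.

Lemma dotv_le_amgm z w a : 0 < a ->
  2 * dotv z w <= a * dotv z z + a^-1 * dotv w w.
Proof.
move=> a0; rewrite /dotv !mulr_sumr -big_split /=; apply: ler_sum => i _.
rewrite -subr_ge0.
have -> : a * (z 0 i * z 0 i) + a^-1 * (w 0 i * w 0 i) - 2 * (z 0 i * w 0 i)
    = a^-1 * (a * z 0 i - w 0 i) ^+ 2 by field; rewrite gt_eqF.
by rewrite mulr_ge0 ?sqr_ge0 // invr_ge0 ltW.
Qed.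

(* Choosing the AM-GM weight [e / (|z|^2 + 1)] makes both terms at most [e]. *)
Lemma dotv_le_near z y w e : 0 < e ->
  dotv (y - w) (y - w) <= e ^+ 2 / (dotv z z + 1) ->
  dotv z y <= dotv z w + e.
Proof.
move=> e0 yw; have z0 := dotvv_ge0 z.
set a := e / (dotv z z + 1).
have a0 : 0 < a by rewrite divr_gt0 // ltr_wpDl.
have az : a * dotv z z <= e.
  by rewrite /a mulrAC ler_pdivrMr ?ltr_wpDl // ler_pM2l //; lra.
have ayw : a^-1 * dotv (y - w) (y - w) <= e.
  rewrite ler_pdivrMl // /a mulrC.
  by rewrite (le_trans yw) // expr2 mulrA.
have := dotv_le_amgm z (y - w) a0; rewrite dotvBr; lra.
Qed.

Lemma continuous_sum (X : topologicalType) n (F : 'I_n -> X -> R) :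
  (forall i, continuous (F i)) -> continuous (fun p => \sum_(i < n) F i p).
Proof.
elim: n F => [|n IH] F cF p.
  under eq_fun do rewrite big_ord0; exact: cst_continuous.
under eq_fun do rewrite big_ord_recr /=.
by apply: continuousD; [apply: IH => i; exact: cF | exact: cF].
Qed.

Lemma continuous_dotvr x : continuous (dotv x).
Proof.
apply: continuous_sum => i p.
have cxi : {for p, continuous (fun=> x 0 i)} by exact: cst_continuous.
exact: continuousM cxi (@coord_continuous R 1 d 0 i p).
Qed.

Lemma continuous_dist2 x : continuous (fun z => dotv (x - z) (x - z)).
Proof.
apply: continuous_sum => i p.
have cxi : {for p, continuous (fun z : 'rV[R]_d => (x - z) 0 i)}.
  have -> : (fun z : 'rV[R]_d => (x - z) 0 i) = (fun z => x 0 i - z 0 i).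
    by apply: funext => z; rewrite !mxE.
  have cx : {for p, continuous (fun=> x 0 i)} by exact: cst_continuous.
  exact: continuousB cx (@coord_continuous R 1 d 0 i p).
exact: (continuousM cxi cxi).
Qed.

Lemma compact_boxed (C : set 'rV[R]_d) (b : 'I_d -> R) : closed C ->
  (forall z, C z -> forall i, `|z 0 i| <= b i) -> compact C.
Proof.
move=> Ccl Cb; apply: (subclosed_compact Ccl (rV_compact _)).
  by move=> i; exact: (@segment_compact _ (- b i) (b i)).
by move=> z /Cb zb i /=; rewrite in_itv /= -ler_norml.
Qed.

Lemma exists_nearest_point (C : set 'rV[R]_d) x : C !=set0 -> closed C ->
  exists2 p, C p & forall z, C z -> dotv (x - p) (x - p) <= dotv (x - z) (x - z).
Proof.
move=> [c Cc] Ccl; set D := dotv (x - c) (x - c).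
pose C' := C `&` [set z | dotv (x - z) (x - z) <= D].
have C'cl : closed C'.
  apply: closedI => //.
  change (closed ((fun z => dotv (x - z) (x - z)) @^-1` [set r | r <= D])).
  by move: (continuous_dist2 (x := x)) => /continuous_closedP; apply; exact: closed_le.
have C'b z : C' z -> forall i, `|z 0 i| <= `|x 0 i| + (D + 1).
  move=> [_ /= zD] i.
  have u2 := le_trans (sqr_coord_le_dotvv (x - z) i) zD; rewrite !mxE in u2.
  have -> : z 0 i = x 0 i - (x 0 i - z 0 i) by ring.
  apply: le_trans (ler_normB _ _) _; rewrite lerD2l.
  move: (x 0 i - z 0 i) u2 => u u2.
  have := sqr_ge0 (u - 1); have := sqr_ge0 (u + 1); rewrite !expr2 in u2 *.
  by case: (lerP 0 u) => u0; [rewrite ger0_norm | rewrite ltr0_norm] => //; nra.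
have [p C'p pmin] := @EVT_min_rV R d _ C' (ex_intro _ c (conj Cc (lexx D)))
  (compact_boxed C'cl C'b) (continuous_subspaceT (continuous_dist2 (x := x))).
exists p; first by move: C'p; rewrite inE => -[].
move=> z Cz; have [zD|Dz] := leP (dotv (x - z) (x - z)) D.
  by apply: pmin; rewrite inE.
by move: C'p; rewrite inE => -[_ /= pD]; exact: le_trans pD (ltW Dz).
Qed.

Lemma is_proj_proj (C : set 'rV[R]_d) x : C !=set0 -> closed C ->
  is_proj C x (Defs.proj C x).
Proof.
move=> C0 Ccl; apply: xgetPex.
by have [p Cp pmin] := exists_nearest_point x C0 Ccl; exists p.
Qed.

Lemma proj_dist2_le (C : set 'rV[R]_d) x y : C !=set0 -> closed C -> C y ->
  dotv (y - Defs.proj C x) (y - Defs.proj C x) <= 4 * dotv (x - y) (x - y).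
Proof.
move=> C0 Ccl Cy; have [_ pmin] := is_proj_proj x C0 Ccl.
have -> : y - Defs.proj C x = (x - Defs.proj C x) - (x - y).
  by rewrite opprB [RHS]addrC addrA subrK.
have := pmin y Cy; have := dotvv_subr_le (x - Defs.proj C x) (x - y); lra.
Qed.

End Euclidean.

Section ConvexCone.
Variables (R : realType) (d : nat).
Implicit Types (u x y z : 'rV[R]_d) (K : set 'rV[R]_d).

Lemma dotv_le0_of_min_dir u k :
  (forall t, 0 < t -> t < 1 -> dotv u u <= dotv (u - t *: k) (u - t *: k)) ->
  dotv u k <= 0.
Proof.
move=> umin; apply/ler_addgt0Pr => e e0; rewrite add0r.
set b := dotv k k; have b0 : 0 <= b := dotvv_ge0 k.
set t := Num.min 2^-1 (e / (b + 1)).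
have t0 : 0 < t by rewrite lt_min invr_gt0 ltr0Sn divr_gt0 // ltr_wpDl.
have t1 : t < 1 by rewrite gt_min; apply/orP; left; rewrite invf_lt1 // ltr1n.
have tb : t * (b + 1) <= e.
  by rewrite -ler_pdivlMr ?ltr_wpDl // ge_min lexx orbT.
have := umin t t0 t1; rewrite dotvv_subZ -/b => ut; nra.
Qed.

Lemma nearest_cone_point K x p : convex_cone K -> K p ->
  (forall z, K z -> dotv (x - p) (x - p) <= dotv (x - z) (x - z)) ->
  dual_cone K (p - x) /\ 0 <= dotv (x - p) p.
Proof.
move=> [_ [KD KZ]] Kp pmin; split.
  move=> k Kk; rewrite -opprB dotvNr oppr_ge0 dotvC.
  apply: dotv_le0_of_min_dir => t t0 _.
  by have := pmin _ (KD _ _ Kp (KZ _ _ (ltW t0) Kk)); rewrite opprD addrA.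
rewrite -oppr_le0 -dotvNr; apply: dotv_le0_of_min_dir => t t0 t1.
have t1' : 0 <= 1 - t by rewrite subr_ge0 ltW.
have -> : x - p - t *: (- p) = x - (1 - t) *: p.
  by rewrite scalerN opprK scalerBl scale1r opprB addrA addrAC.
exact: pmin _ (KZ _ _ t1' Kp).
Qed.

Lemma dual_cone_ge0 K y : @orthant R d `<=` K -> dual_cone K y ->
  forall i, 0 <= y 0 i.
Proof.
move=> orthK Ky i; rewrite -dotv_deltal; apply/Ky/orthK => j.
by rewrite mxE; case: (_ && _).
Qed.

Lemma closed_dual_cone0 K : closed (dual_cone0 K).
Proof.
have -> : dual_cone0 K = \bigcap_(x in K) (dotv x @^-1` [set r | 0 <= r])
    `&` \bigcap_(i in [set: 'I_d])
          ((fun y : 'rV[R]_d => y 0 i) @^-1` [set r | val i = d.-1 -> r = 1]).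
  apply/seteqP; split => y [Ky y1].
    by split => [x Kx | i _]; [exact: Ky | exact: y1].
  by split => [x Kx | i]; [exact: Ky | exact: y1].
apply: closedI; apply: closed_bigI.
  move=> x _; move: (continuous_dotvr (x := x)) => /continuous_closedP; apply.
  exact: closed_ge.
move=> i _; move: (@coord_continuous R 1 d 0 i) => /continuous_closedP; apply.
have [->|ni] := eqVneq (val i) d.-1.
  have -> : [set r : R | d.-1 = d.-1 -> r = 1] = [set r | r = 1].
    by apply/seteqP; split => r /=; [apply | move=> ->].
  exact: closed_eq.
have -> : [set r : R | val i = d.-1 -> r = 1] = setT.
  by apply/seteqP; split => // r _ /eqP; rewrite (negPf ni).
exact: closedT.
Qed.

Lemma closed_convex_cone_bipolar K x : closed K -> convex_cone K ->
  (forall y, dual_cone K y -> 0 <= dotv x y) -> K x.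
Proof.
move=> Kcl Kcc xKK; have K0 : K !=set0 by exists 0; case: Kcc.
have [p Kp pmin] := exists_nearest_point x K0 Kcl.
have [pxK xpp] := nearest_cone_point Kcc Kp pmin.
have xpx : dotv (x - p) x <= 0.
  by rewrite dotvC -oppr_ge0 -dotvNr opprB; exact: xKK.
have xp0 : dotv (x - p) (x - p) = 0.
  by apply/eqP; rewrite eq_le dotvv_ge0 andbT dotvBr; lra.
by rewrite -[x](subrK p) (dotvv_eq0 xp0) add0r.
Qed.

End ConvexCone.

Definition box_dense (R : realType) (c : R) n (th : nat -> n.-tuple R) :=
  forall f : 'I_n -> R, (forall j, c^-1 <= f j <= c) ->
  forall e, 0 < e -> exists k, forall j, `|tnth (th k) j - f j| <= e.

Section NormalizedDualCone.
Variables (R : realType) (d : nat) (K : set 'rV[R]_d).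
Local Notation K0 := (dual_cone0 K).

Lemma dotv_proj_dual_cone0_le0 z v : K0 !=set0 -> K (- z) ->
  dotv z (Defs.proj K0 v) <= 0.
Proof.
move=> K0n Kz; have [[Kp _] _] := is_proj_proj v K0n (closed_dual_cone0 (K := K)).
by rewrite -oppr_ge0 dotvC -dotvNr dotvC; exact: Kp.
Qed.

Hypothesis d_gt0 : (0 < d)%N.
Hypotheses (Kcl : closed K) (Kcc : convex_cone K) (orthK : @orthant R d `<=` K).
Hypothesis bdK : dual_cone K `&` @orthant_boundary R d = [set 0].

Fact last_lt : (d.-1 < d)%N. Proof. by rewrite ltn_predL. Qed.
Let last : 'I_d := Ordinal last_lt.

(* By [bdK] a nonzero dual vector has a positive last coordinate, so it rescales
   into [K0]; conclude by the bipolar theorem. *)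
Lemma neg_in_cone_of_dual_cone0 z : (forall y, K0 y -> dotv z y <= 0) -> K (- z).
Proof.
move=> zK0; apply: closed_convex_cone_bipolar => // y Ky.
rewrite dotvC dotvNr oppr_ge0 dotvC.
have y_ge0 := dual_cone_ge0 orthK Ky.
have [ylast0|ylast_neq0] := eqVneq (y 0 last) 0.
  have : (dual_cone K `&` @orthant_boundary R d) y.
    by split=> //; split=> //; exists last.
  by rewrite bdK => ->; rewrite dotv0r.
have ylast_gt0 : 0 < y 0 last by rewrite lt_def ylast_neq0 y_ge0.
have K0y : K0 ((y 0 last)^-1 *: (y : 'rV[R]_d)).
  split=> [x Kx | i il].
    by rewrite dotvZr; apply: mulr_ge0; [rewrite invr_ge0 ltW | apply: Ky].
  by rewrite mxE (_ : i = last) ?mulVf //; exact: val_inj.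
have -> : y = y 0 last *: ((y 0 last)^-1 *: y) by rewrite scalerKV.
by rewrite dotvZr; apply: mulr_ge0_le0; [exact: ltW | exact: zK0].
Qed.

Variables (s : 'rV[R]_d) (c : R) (th : nat -> (d.-1).-tuple R).
Hypotheses (K0s : K0 s) (c_ge1 : 1 <= c) (th_dense : box_dense c th).
Hypothesis K0_bounds : forall y (i : 'I_d), (i < d.-1)%N -> K0 y ->
  c^-1 * s 0 i <= y 0 i <= c * s 0 i.

Lemma dual_cone0_ratio y : K0 y ->
  exists2 f : 'I_d.-1 -> R, (forall j, c^-1 <= f j <= c) &
    forall j, s 0 (widen_ord (leq_pred d) j) * f j = y 0 (widen_ord (leq_pred d) j).
Proof.
move=> K0y; have c0 : 0 < c := lt_le_trans ltr01 c_ge1.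
have s_ge0 := dual_cone_ge0 orthK K0s.1.
exists (fun j => let i := widen_ord (leq_pred d) j in
  if s 0 i == 0 then 1 else y 0 i / s 0 i) => j /=;
  have /andP[lo hi] := K0_bounds (i := widen_ord (leq_pred d) j) (ltn_ord j) K0y;
  case: eqP => [si0|/eqP si0].
- by rewrite invf_le1 // c_ge1.
- have si_gt0 : 0 < s 0 (widen_ord (leq_pred d) j) by rewrite lt_def si0 s_ge0.
  by rewrite ler_pdivlMr // ler_pdivrMr // lo hi.
- by apply/eqP; rewrite si0 mul0r eq_le; move: lo hi; rewrite si0 !mulr0 => -> ->.
- by rewrite mulrC divfK.
Qed.

Lemma exists_Stheta_near y e : K0 y -> 0 < e ->
  exists k, dotv (Stheta s (th k) - y) (Stheta s (th k) - y) <= e.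
Proof.
move=> K0y e0; have [f f_box sf] := dual_cone0_ratio K0y.
set A := dotv s s; have A0 : 0 <= A := dotvv_ge0 s.
set del := Num.min 1 (e / (A + 1)).
have del0 : 0 < del by rewrite lt_min ltr01 divr_gt0 // ltr_wpDl.
have del1 : del <= 1 by rewrite ge_min lexx.
have delA : del * (A + 1) <= e by rewrite -ler_pdivlMr ?ltr_wpDl // ge_min lexx orbT.
have [k thk] := th_dense f_box del0; exists k.
have coord i : (Stheta s (th k) - y) 0 i * (Stheta s (th k) - y) 0 i
    <= del ^+ 2 * (s 0 i * s 0 i).
  rewrite !mxE; case: ifPn => [hi|/ord_eq_pred hi]; last first.
    rewrite (K0y.2 i hi) (K0s.2 i hi) subrr mul0r.
    by rewrite mulr_ge0 ?sqr_ge0 // mulr1.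
  pose j : 'I_d.-1 := Ordinal hi.
  have ij : widen_ord (leq_pred d) j = i by exact: val_inj.
  have thi : nth 0 (tval (th k)) i = tnth (th k) j by rewrite (tnth_nth 0).
  have yi : y 0 i = s 0 i * f j by rewrite -ij sf.
  rewrite thi yi -mulrBr; move: (thk j); set u := tnth (th k) j - f j.
  rewrite ler_norml => /andP[u_lo u_hi].
  have uu : u * u <= del ^+ 2 by nra.
  by rewrite mulrACA mulrC ler_wpM2r // -expr2 sqr_ge0.
apply: le_trans (ler_sum _ (fun i _ => coord i)) _.
by rewrite -mulr_sumr -/(dotv s s) -/A; nra.
Qed.

Lemma neg_in_cone_of_proj_Stheta z :
  (forall k, dotv z (Defs.proj K0 (Stheta s (th k))) <= 0) -> K (- z).
Proof.
move=> zX; apply: neg_in_cone_of_dual_cone0 => y K0y.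
apply/ler_addgt0Pr => e e0; rewrite add0r.
have z1 : 0 < dotv z z + 1 by rewrite ltr_wpDl ?dotvv_ge0.
have eta0 : 0 < e ^+ 2 / (dotv z z + 1) / 4 by rewrite !divr_gt0 ?exprn_gt0.
have [k vy] := exists_Stheta_near K0y eta0.
have yX := proj_dist2_le (Stheta s (th k)) (ex_intro _ s K0s)
  (closed_dual_cone0 (K := K)) K0y.
have := zX k; have := @dotv_le_near _ _ z y _ _ e0 (le_trans yX _).
by rewrite -ler_pdivlMl // mulrC => /(_ vy); lra.
Qed.

End NormalizedDualCone.

Section PolarSets.
Variables (R : realType) (dO : measure_display) (Om : measurableType dO).
Implicit Types (Ps : set (probability Om R)) (N : set Om).

Lemma polarS Ps N N' : N `<=` N' -> polar Ps N' -> polar Ps N.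
Proof.
by move=> NN' [A [N'A uA nA]]; exists A; split => //; exact: subset_trans N'A.
Qed.

Lemma polar_bigcup Ps (N : nat -> set Om) :
  (forall k, polar Ps (N k)) -> polar Ps (\bigcup_k N k).
Proof.
move=> /choice[A hA]; exists (\bigcup_k A k); split.
- by move=> w [k _ Nw]; exists k => //; case: (hA k) => + _ _; apply.
- move=> P; have /choice[BC hBC] : forall k, exists BC : set Om * set Om,
      [/\ measurable BC.1, measurable BC.2, BC.1 `<=` A k, A k `<=` BC.2
        & P (BC.2 `\` BC.1) = 0%E].
    by move=> k; case: (hA k) => _ /(_ P) [B [C h]] _; exists (B, C).
  have mB k : measurable (BC k).1 by case: (hBC k).
  have mC k : measurable (BC k).2 by case: (hBC k).
  exists (\bigcup_k (BC k).1), (\bigcup_k (BC k).2); split.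
  + exact: bigcupT_measurable.
  + exact: bigcupT_measurable.
  + by move=> w [k _ ?]; exists k => //; case: (hBC k) => _ _ + _ _; apply.
  + by move=> w [k _ ?]; exists k => //; case: (hBC k) => _ _ _ + _; apply.
  + have : P.-negligible (\bigcup_k ((BC k).2 `\` (BC k).1)).
      apply: negligible_bigcup => k; exists ((BC k).2 `\` (BC k).1).
      by case: (hBC k) => _ _ _ _ P0; split => //; exact: measurableD.
    case=> M [mM PM sM].
    apply/eqP; rewrite eq_le measure_ge0 andbT -PM le_measure ?inE //.
      by apply: measurableD; exact: bigcupT_measurable.
    apply: subset_trans sM => w [[k _ Cw] Bw]; exists k => //; split => // Bkw.
    by apply: Bw; exists k.
- move=> P PP; have : P.-negligible (\bigcup_k A k).
    apply: negligible_bigcup => k; have [_ _ /(_ P PP) [C [mC AC PC]]] := hA k.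
    by exists C; split.
  by case=> M [mM PM sM]; exists M; split.
Qed.

Variables (T d : nat) (c : R).
Local Notation L := (Defs.Lspace R T d).

Definition fst_mfun (wb : (Om * L)%type) : Om := wb.1.
HB.instance Definition _ :=
  isMeasurableFun.Build _ _ _ _ fst_mfun (@measurable_fst _ _ Om L).

Lemma polar_fst Ps N : polar Ps N -> polar (Pbar T d c Ps) [set wb | N wb.1].
Proof.
move=> [A [NA uA nA]]; exists (A `*` setT); split.
- by move=> wb /= Nw; split => //; exact: NA.
- move=> Q; have [B [C [mB mC BA AC Q0]]] := uA (distribution Q fst_mfun).
  exists (B `*` setT), (C `*` setT); split; try exact: measurableX.
  + by move=> wb [/= Bw _]; split => //; exact: BA.
  + by move=> wb [/= Aw _]; split => //; exact: AC.
  + rewrite -Q0 /distribution /pushforward; congr (Q _).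
    apply/seteqP; split => wb /=; rewrite /fst_mfun.
      by case=> -[Cw _] nBw; split => // Bw; apply: nBw.
    by case=> Cw nBw; split => // -[].
- move=> Q [[P PP QP] _]; have [C [mC AC PC]] := nA P PP.
  exists (C `*` setT); split; first exact: measurableX.
    by move=> wb [/= Aw _]; split => //; exact: AC.
  by rewrite QP.
Qed.

Section FixedTheta.
Variable th : L.

Definition pair_mfun (w : Om) : (Om * L)%type := (w, th).
HB.instance Definition _ :=
  isMeasurableFun.Build _ _ _ _ pair_mfun (@pair2_measurable _ _ Om L th).

Lemma measurable_pair_preimage (B : set (Om * L)%type) :
  measurable B -> measurable (pair_mfun @^-1` B).
Proof. by move=> mB; rewrite -[_ @^-1` _]setTI; exact: measurable_funP. Qed.

(* [distribution P pair_mfun] is the Dirac extension P (x) delta_th of [P],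
   which lies in [Pbar]. *)
Lemma polar_section Ps (N : set (Om * L)%type) :
  Lambda T d c th -> polar (Pbar T d c Ps) N -> polar Ps [set w | N (w, th)].
Proof.
move=> th_in [A [NA uA nA]]; exists (pair_mfun @^-1` A); split.
- by move=> w Nw; exact: NA.
- move=> P; have [B [C [mB mC BA AC P0]]] := uA (distribution P pair_mfun).
  exists (pair_mfun @^-1` B), (pair_mfun @^-1` C); split.
  + exact: measurable_pair_preimage.
  + exact: measurable_pair_preimage.
  + by move=> w; exact: BA.
  + by move=> w; exact: AC.
  + by rewrite -P0.
- move=> P PP; have Pth : Pbar T d c Ps (distribution P pair_mfun).
    split.
      exists P => // B mB; rewrite /distribution /pushforward; congr (P _).
      by apply/seteqP; split => w /= => [[]|].
    rewrite /distribution /pushforward -(probability_setT P); congr (P _).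
    by apply/seteqP; split => w // _.
  have [C [mC AC PC]] := nA _ Pth.
  exists (pair_mfun @^-1` C); split => //; first exact: measurable_pair_preimage.
  by move=> w; exact: AC.
Qed.

End FixedTheta.
End PolarSets.

Section RationalGrid.
Variables (R : realType) (c : R) (n : nat).
Hypothesis c_ge1 : 1 <= c.

Definition clamp (r : R) := if r < c^-1 then c^-1 else if c < r then c else r.

Lemma clamp_box r : c^-1 <= clamp r <= c.
Proof.
have cc : c^-1 <= c by rewrite (le_trans _ c_ge1) // invf_le1 // (lt_le_trans ltr01).
rewrite /clamp; case: ltP => [_|r_ge]; first by rewrite lexx cc.
by case: ltP => [_|r_le]; rewrite ?lexx ?cc ?r_ge ?r_le.
Qed.

Lemma clamp_dist r x : c^-1 <= x <= c -> `|clamp r - x| <= `|r - x|.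
Proof.
move=> /andP[x_lo x_hi]; rewrite /clamp.
have := ler_norm (r - x); have := ler_norm (x - r); rewrite distrC => n1 n2.
case: ltP => r_lo; first by rewrite ler_norml; apply/andP; split; lra.
by case: ltP => r_hi //; rewrite ler_norml; apply/andP; split; lra.
Qed.

Definition rat_grid (k : nat) : n.-tuple R :=
  [tuple clamp (ratr (tnth (odflt (nseq_tuple n (0 : rat)) (unpickle k)) j)) | j < n].

Lemma rat_grid_box k j : c^-1 <= tnth (rat_grid k) j <= c.
Proof. by rewrite tnth_mktuple clamp_box. Qed.

Lemma box_dense_rat_grid : box_dense c rat_grid.
Proof.
move=> f f_box e e0.
have /choice[q qf] j : exists q : rat, ratr q \in `]f j - e, f j + e[.
  by apply: rat_in_itvoo; lra.
exists (pickle [tuple q j | j < n]) => j.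
rewrite tnth_mktuple pickleK /= tnth_mktuple.
apply: le_trans (clamp_dist _ (f_box j)) _.
by move: (qf j); rewrite in_itv /= ler_norml => /andP[? ?]; apply/andP; split; lra.
Qed.

End RationalGrid.

Section QuasiSureDuality.
Variables (R : realType) (dO : measure_display) (Om : measurableType dO).
Variables (T d : nat) (c : R) (Ps : set (probability Om R)).
Variables (K : 'I_T.+1 -> Om -> set 'rV[R]_d) (S : 'I_T.+1 -> Om -> 'rV[R]_d).
Variables (t : 'I_T.+1) (zeta : Om -> 'rV[R]_d).

Lemma qs_Xproc_le0 : (forall w, dual_cone0 (K t w) !=set0) ->
  qs Ps (fun w => K t w (- zeta w)) ->
  qs (Pbar T d c Ps) (fun wb => dotv (zeta wb.1) (Xproc K S t wb) <= 0).
Proof.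
move=> K0n Kz; apply: polarS (polar_fst T d c Kz) => -[w th] /= Xz Kzw.
exact/Xz/dotv_proj_dual_cone0_le0.
Qed.

Hypothesis d_gt0 : (0 < d)%N.
Hypothesis c_ge1 : 1 <= c.
Hypothesis K_cone : forall w, [/\ closed (K t w), convex_cone (K t w),
  @orthant R d `<=` K t w & dual_cone (K t w) `&` @orthant_boundary R d = [set 0]].
Hypothesis S_dual_cone0 : forall w, dual_cone0 (K t w) (S t w).
Hypothesis dual_cone0_bounds : forall w y (i : 'I_d), (i < d.-1)%N ->
  dual_cone0 (K t w) y -> c^-1 * S t w 0 i <= y 0 i <= c * S t w 0 i.

Lemma qs_cone_of_qs_Xproc :
  qs (Pbar T d c Ps) (fun wb => dotv (zeta wb.1) (Xproc K S t wb) <= 0) ->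
  qs Ps (fun w => K t w (- zeta w)).
Proof.
move=> Xz.
pose th k : Defs.Lspace R T d := [tuple rat_grid c d.-1 k | _ < T.+1].
have th_in k : Lambda T d c (th k).
  by move=> s i; rewrite tnth_mktuple rat_grid_box.
apply: polarS (polar_bigcup (fun k => polar_section (th_in k) Xz)) => w /= Kzw.
apply: contrapT => Xzw; apply: Kzw.
have [Kcl Kcc orthK bdK] := K_cone w.
apply: (neg_in_cone_of_proj_Stheta d_gt0 Kcl Kcc orthK bdK (S_dual_cone0 w) c_ge1
  (@box_dense_rat_grid _ c d.-1) (dual_cone0_bounds (w := w))) => k.
apply: contrapT => Xzk; apply: Xzw; exists k => //.
by rewrite /Xproc /= tnth_mktuple.
Qed.

End QuasiSureDuality.

Theorem mainTheorem1 (R : realType) (dO : measure_display)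
  (Om : measurableType dO) (T d : nat)
  (F0 F : 'I_T.+1 -> set (set Om)) (Ps : set (probability Om R))
  (K : 'I_T.+1 -> Om -> set 'rV[R]_d) (S : 'I_T.+1 -> Om -> 'rV[R]_d) (c : R) :
  (2 <= d)%N ->
  filtration F0 -> filtration F -> (forall t, F0 t `<=` F t) ->
  Ps !=set0 ->
  cone_assumptions F0 K ->
  price_assumptions F0 K S c ->
  (forall (t : 'I_T.+1) (zeta : Om -> 'rV[R]_d), meas_wrt_vec (F t) zeta ->
     (qs Ps (fun w => K t w (- zeta w)) <->
      qs (Pbar T d c Ps)
         (fun wb => dotv (zeta wb.1) (Xproc K S t wb) <= 0)))
  /\
  (forall eta : 'I_T.+1 -> Om -> 'rV[R]_d, adapted F eta ->
     (admissible Ps K eta <->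
      forall t : 'I_T.+1, qs (Pbar T d c Ps)
         (fun wb => dotv (eta t wb.1) (Xproc K S t wb) <= 0))).
Proof.
move=> d_ge2 _ _ _ _ cone [_ [S_in [c_gt1 S_bounds]]].
have d_gt0 : (0 < d)%N by exact: leq_trans d_ge2.
have duality t zeta : qs Ps (fun w => K t w (- zeta w)) <->
    qs (Pbar T d c Ps) (fun wb => dotv (zeta wb.1) (Xproc K S t wb) <= 0).
  have K_cone w : [/\ closed (K t w), convex_cone (K t w),
      @orthant R d `<=` K t w & dual_cone (K t w) `&` @orthant_boundary R d = [set 0]].
    by have [_ /(_ w) []] := cone t.
  split; first by apply: qs_Xproc_le0 => w; exists (S t w); exact: (S_in t w).1.
  apply: qs_cone_of_qs_Xproc d_gt0 (ltW c_gt1) K_cone (fun w => (S_in t w).1) _.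
  exact: S_bounds.
split=> [t zeta _ | eta _]; first exact: duality.
by split=> qs_eta t; apply/duality/qs_eta.
Qed.
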